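(* Let $G$ be a graph and let $k\geq 3$ be an integer. A complex number $\lambda$ is an eigenvalue of the power hypergraph $G^{(k)}$ if and only if: (a) when $k=3$: some signed induced subgraph of $G$ has an eigenvalue $\beta$ with $\beta^2=\lambda^k$; (b) when $k\geq 4$: some signed subgraph of $G$ has an eigenvalue $\beta$ with $\beta^2=\lambda^k$.
   Context: Tensor eigenvalues: for a $k$-order $n$-dimensional complex tensor $T=(t_{i_1\cdots i_k})$ and $\mathbf{x}\in\mathbb{C}^n$, $T\mathbf{x}^{k-1}\in\mathbb{C}^n$ has $i$-th entry $\sum_{i_2,\dots,i_k=1}^n t_{i i_2\cdots i_k}x_{i_2}\cdots x_{i_k}$, and $\mathbf{x}^{[k-1]}=(x_1^{k-1},\dots,x_n^{k-1})^\top$. A number $\lambda\in\mathbb{C}$ is an eigenvalue of $T$ with eigenvector $\mathbf{x}$ if $\mathbf{x}\neq 0$ and $T\mathbf{x}^{k-1}=\lambda\mathbf{x}^{[k-1]}$. The adjacency tensor of a $k$-uniform hypergraph $H$ on $n$ vertices is the $k$-order $n$-dimensional tensor with $a_{i_1\cdots i_k}=\frac{1}{(k-1)!}$ if $\{i_1,\dots,i_k\}$ is an edge of $H$ and $0$ otherwise; eigenvalues of $H$ are the eigenvalues of its adjacency tensor. The $k$-power hypergraph $G^{(k)}$ of a graph $G$ is the $k$-uniform hypergraph obtained by adding $k-2$ new vertices to each edge of $G$ (distinct edges receive disjoint sets of new vertices); for $e\in E(G)$, $N_e$ denotes the set of new vertices added to $e$, so $e\cup N_e$ is a hyperedge. A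 signed graph $G_\pi$ is a graph $G=(V,E)$ with a sign function $\pi:E\to\{+1,-1\}$; its adjacency matrix is the symmetric matrix with $(i,j)$ entry $\pi(i,j)$ if $i\sim j$ and $0$ otherwise, and its eigenvalues are those of this matrix. A signed (induced) subgraph of $G$ is a signed graph $\widehat G_\pi$ where $\widehat G$ is an (induced) subgraph of $G$ and $\pi$ is any sign function on $E(\widehat G)$. *)

(* complex numbers are R[i] (mathcomp-real-closed) over a
   realType R (mathcomp-analysis reals), i.e. genuinely the complex numbers. *)
From HB Require Import structures.
From mathcomp Require Import all_boot all_order all_algebra.
From mathcomp Require Import reals complex.
Set Implicit Arguments. Unset Strict Implicit. Unset Printing Implicit Defensive.
Import Order.TTheory GRing.Theory Num.Theory.
Local Open Scope ring_scope.

(* A k-uniform hypergraph on the finite vertex type W is given by its set of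
   hyperedges hE : {set {set W}} (each of cardinality k). *)
Definition hadj (F : fieldType) (W : finType) (k : nat) (hE : {set {set W}})
    (s : seq W) : F :=
  if [set w in s] \in hE then (k.-1)`!%:R^-1 else 0.

Definition tensor_apply (F : fieldType) (W : finType) (k : nat)
    (hE : {set {set W}}) (x : W -> F) (i : W) : F :=
  \sum_(t : (k.-1).-tuple W) hadj F k hE (i :: t) * \prod_(j <- t) x j.

Definition hyper_eigenvalue (F : fieldType) (W : finType) (k : nat)
    (hE : {set {set W}}) (lambda : F) : Prop :=
  exists x : W -> F, (exists w, x w != 0) /\
    forall i : W, tensor_apply k hE x i = lambda * x i ^+ k.-1.

(* A (finite simple) graph: vertex type V, adjacency e : rel V symmetric
   and irreflexive (hypotheses of the theorem). Edges are 2-subsets {u,v}. *)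
Definition is_gedge (V : finType) (e : rel V) (A : {set V}) : bool :=
  [exists u, exists v, e u v && (A == [set u; v])].

Definition gedge (V : finType) (e : rel V) := {A : {set V} | is_gedge e A}.

(* Vertices of G^(k): old vertices plus k-2 new vertices N_f for each edge f. *)
Definition pvert (V : finType) (e : rel V) (k : nat) : finType :=
  (V + (gedge e * 'I_(k - 2)))%type.

Definition phedge (V : finType) (e : rel V) (k : nat) (f : gedge e)
    : {set pvert e k} :=
  [set inl v | v in val f] :|: [set inr (f, j) | j : 'I_(k - 2)].

Definition power_hedges (V : finType) (e : rel V) (k : nat)
    : {set {set pvert e k}} :=
  [set phedge k f | f : gedge e].

(* A signed subgraph of G with vertex set S is encoded by s : V -> V -> int:
   s u v = 0 if uv is not an edge of the subgraph, and s u v = pi(u,v) in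
   {+1,-1} if it is. *)
Definition signed_subgraph (V : finType) (e : rel V) (S : {set V})
    (s : V -> V -> int) : Prop :=
  [/\ forall u v, s u v = s v u,
      forall u v, s u v \in [:: 0%Z; 1%Z; (-1)%Z] &
      forall u v, s u v != 0 -> [/\ e u v, u \in S & v \in S]].

Definition signed_induced_subgraph (V : finType) (e : rel V) (S : {set V})
    (s : V -> V -> int) : Prop :=
  signed_subgraph e S s /\
  forall u v, u \in S -> v \in S -> e u v -> s u v != 0.

Definition signed_adj (F : fieldType) (V : finType) (S : {set V})
    (s : V -> V -> int) : 'M[F]_#|S| :=
  \matrix_(i < #|S|, j < #|S|)
     (s (enum_val i) (enum_val j))%:~R.

From HB Require Import structures.
From mathcomp Require Import all_boot all_order all_algebra.
From mathcomp Require Import reals complex.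
From mathcomp Require Import ring.
Import Order.TTheory GRing.Theory Num.Theory.
Local Open Scope ring_scope.

(* Let x be an eigenvector of G^(k) for lambda <> 0, and P_f the product of x
   over the hyperedge f + N_f.  Multiplied by its own coordinate, the
   eigen-equation reads P_f = lambda x_w^k at a new vertex w of f, and
   sum_(f ∋ u) P_f = lambda x_u^k at an old vertex u.  Multiplying the first
   over the k - 2 new vertices of f = {u, v} eliminates them:
   lambda^(k-2) P_f^2 = (x_u x_v)^k.  So, with z_u = sqrt(x_u^k) and
   mu = sqrt(lambda^(k-2)), P_f mu = ± z_u z_v, and labelling f by this sign
   turns the old-vertex equations into A z = (lambda mu) z on the support of x,
   where (lambda mu)^2 = lambda^k.
   Conversely, an eigenvector y for beta of a signed subgraph lifts to x with
   x_u a k-th root of y_u^2 and the new coordinates of f k-th roots of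
   P_f / lambda, for P_f = (lambda / beta) sign(f) y_u y_v, one of them twisted
   by a root of unity so that the hyperedge multiplies to P_f.  When P_f = 0 but
   y_u y_v <> 0, the equation at a new vertex of f needs another new vertex
   with coordinate 0: it exists for k >= 4, and for k = 3 inducedness rules
   this case out.  The eigenvalue 0 occurs on both sides. *)


Lemma eq_set2 {T : finType} {a b u v : T} : a != b -> [set a; b] = [set u; v] ->
  (u == a) && (v == b) || (u == b) && (v == a).
Proof.
move=> ab huv.
have uv : u != v.
  by apply/eqP => uv; move: (cards2 u v); rewrite -huv cards2 ab uv eqxx.
have : (u \in [set a; b]) && (v \in [set a; b]) by rewrite huv !inE !eqxx orbT.
rewrite !inE => /andP[/orP[]/eqP hu /orP[]/eqP hv]; subst u v;
  rewrite ?eqxx ?orbT //; by rewrite eqxx in uv.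
Qed.

Section GraphEdges.
Context {V : finType} {e : rel V}.
Hypotheses (e_sym : symmetric e) (e_irr : irreflexive e).

Lemma gedge_ends (f : gedge e) :
  exists a b, [/\ e a b, a != b & val f = [set a; b]].
Proof.
case: f => A /= /existsP[a /existsP[b /andP[eab /eqP ->]]].
exists a, b; split => //.
by apply: contraTneq eab => ->; rewrite e_irr.
Qed.

Lemma gedge_set2 {f : gedge e} {u v : V} : val f = [set u; v] -> e u v /\ u != v.
Proof.
have [a [b [eab ab ->]]] := gedge_ends f => /(eq_set2 ab).
by case/orP => /andP[/eqP-> /eqP->]; split=> //; rewrite 1?e_sym 1?eq_sym.
Qed.

Definition edge_of (u v : V) : option (gedge e) :=
  [pick f : gedge e | val f == [set u; v]].

Lemma edge_ofC (u v : V) : edge_of u v = edge_of v u.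
Proof. by rewrite /edge_of setUC. Qed.

Lemma edge_of_some {u v : V} {f : gedge e} : edge_of u v = Some f -> val f = [set u; v].
Proof. by rewrite /edge_of; case: pickP => [g /eqP hg [<-] | _]. Qed.

Lemma edge_ofP {u v : V} : e u v -> exists2 f, edge_of u v = Some f & val f = [set u; v].
Proof.
move=> euv; rewrite /edge_of; case: pickP => [f /eqP hf | none]; first by exists f.
have uv_edge : is_gedge e [set u; v].
  by apply/existsP; exists u; apply/existsP; exists v; rewrite euv eqxx.
by have := none (exist (is_gedge e) _ uv_edge); rewrite /= eqxx.
Qed.

Lemma big_gedge_incident (M : nmodType) (w : V) (H : gedge e -> M) :
  \sum_(f : gedge e | w \in val f) H f =
  \sum_u (if edge_of w u is Some f then H f else 0).
Proof.
have edge_of_sum u : (if edge_of w u is Some f then H f else 0) =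
                     \sum_(f : gedge e | val f == [set w; u]) H f.
  rewrite /edge_of; case: pickP => [g /eqP hg | none]; last by rewrite big_pred0.
  rewrite (big_pred1 g) // => f /=; apply/eqP/eqP => [hf | -> //].
  exact: val_inj (etrans hf (esym hg)).
rewrite (eq_bigr _ (fun u _ => edge_of_sum u)) (exchange_big_dep predT) //=.
rewrite big_mkcond /=; apply: eq_bigr => f _.
have [a [b [_ ab hf]]] := gedge_ends f.
change (\val f) with (sval f) in hf.
case: ifP => wf; last first.
  rewrite big_pred0 // => u; apply: contraFF wf => /eqP ->.
  by rewrite !inE eqxx.
have [o [wo ho]] : exists o, w != o /\ val f = [set w; o].
  move: wf; rewrite hf !inE => /orP[]/eqP->; first by exists b.
  by exists a; rewrite eq_sym setUC.
rewrite (big_pred1 o) // => u /=; rewrite ho; apply/eqP/eqP => [/(eq_set2 wo) | -> //].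
by rewrite eqxx (negbTE wo) /= orbF => /eqP.
Qed.

Definition edge_weight (s : V -> V -> int) (f : gedge e) : int :=
  if [pick p : V * V | val f == [set p.1; p.2]] is Some p then s p.1 p.2 else 0.

Lemma edge_weightE {s : V -> V -> int} {f : gedge e} {a b : V} :
  (forall u v, s u v = s v u) -> val f = [set a; b] -> edge_weight s f = s a b.
Proof.
move=> ssym hf; have [_ ab] := gedge_set2 hf.
rewrite /edge_weight; case: pickP => [[u v] /eqP /= hp | none]; last first.
  by have := none (a, b); rewrite /= hf eqxx.
have := eq_set2 ab (etrans (esym hf) hp).
by case/orP => /andP[/eqP-> /eqP->] //; rewrite ssym.
Qed.

Definition pair_weight (g : gedge e -> int) (u v : V) : int :=
  if edge_of u v is Some f then g f else 0.

End GraphEdges.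

Section SignedAdjacency.
Context {F : fieldType} {V : finType} {S : {set V}} {s : V -> V -> int}.
Hypothesis s_sym : forall u v, s u v = s v u.

Lemma signed_adj_eigenvalueP (beta : F) :
  eigenvalue (signed_adj F S s) beta <->
  exists y : V -> F, [/\ forall u, u \notin S -> y u = 0, exists u, y u != 0 &
    forall u, u \in S -> \sum_w (s u w)%:~R * y w = beta * y u].
Proof.
split => [/eigenvalueP[v hv v_neq0] | [y [y_supp [u0 yu0] hy]]].
  exists (fun u => \sum_(i | enum_val i == u) v 0 i); split.
  - move=> u uS; rewrite big_pred0 // => i; apply/negbTE.
    by apply: contraNneq uS => <-; exact: enum_valP.
  - have [i vi] : exists i, v 0 i != 0.
      apply/existsP; apply: contraNT v_neq0 => /existsPn v0.
      by apply/eqP/rowP => i; rewrite mxE; apply/eqP/negbNE/v0.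
    exists (enum_val i); rewrite (big_pred1 i) // => i' /=.
    by apply/eqP/eqP => [/enum_val_inj | ->].
  move=> u uS /=; set j := enum_rank_in uS u.
  have ju : enum_val j = u by rewrite enum_rankK_in.
  rewrite (big_pred1 j); last by move=> i /=; rewrite -ju (inj_eq enum_val_inj).
  move/rowP: hv => /(_ j); rewrite !mxE => <-.
  under eq_bigr do rewrite mulr_sumr.
  rewrite [RHS](partition_big (fun i => enum_val i) predT) //=.
  apply: eq_bigr => w _; apply: eq_bigr => i /eqP iw.
  by rewrite !mxE mulrC ju iw s_sym.
have u0S : u0 \in S by apply: contraR yu0 => /y_supp ->.
apply/eigenvalueP; exists (\row_i y (enum_val i)).
  apply/rowP => j; rewrite !mxE.
  under eq_bigr do rewrite !mxE.
  rewrite -(big_enum_val (A := mem S) (fun u => y u * (s u (enum_val j))%:~R)) /=.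
  rewrite -hy ?enum_valP // [RHS](bigID (mem S)) /= [X in _ = _ + X]big1 ?addr0.
    by apply: eq_bigr => u _; rewrite mulrC s_sym.
  by move=> u /y_supp ->; rewrite mulr0.
apply/eqP => /rowP /(_ (enum_rank_in u0S u0)); rewrite !mxE enum_rankK_in //.
by move/eqP; rewrite (negbTE yu0).
Qed.

End SignedAdjacency.

Lemma set_cons_tupleE (W : finType) (A : {set W}) (i : W) (n : nat) (t : n.-tuple W) :
  i \in A -> #|A| = n.+1 ->
  ([set w in i :: t] == A) = all (fun w => w \in A :\ i) t && uniq t.
Proof.
move=> iA cardA; apply/eqP/andP => [defA | [t_sub t_uniq]].
  have : uniq (i :: t) by apply/card_uniqP; rewrite -cardsE defA cardA /= size_tuple.
  rewrite cons_uniq => /andP[it ->]; split=> //.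
  apply/allP => w wt; rewrite in_setD1 -defA inE in_cons wt orbT andbT.
  by apply: contraNneq it => <-.
have it : i \notin t by apply/negP => /(allP t_sub); rewrite in_setD1 eqxx.
apply/eqP; rewrite eqEcard cardA cardsE (card_uniqP _) /= ?it ?size_tuple //.
rewrite leqnn andbT; apply/subsetP => w; rewrite inE in_cons.
by case/orP => [/eqP-> // | /(allP t_sub)]; rewrite in_setD1 => /andP[].
Qed.

Section UniformTensor.
Variables (F : numFieldType) (W : finType) (k : nat) (hE : {set {set W}}).
Hypotheses (k_gt0 : (0 < k)%N) (hE_unif : {in hE, forall A : {set W}, #|A| = k}).

(* The (k-1)! orderings of the other vertices of a hyperedge cancel its weight. *)
Lemma tensor_applyE (x : W -> F) (i : W) :
  tensor_apply k hE x i = \sum_(A in hE | i \in A) \prod_(w in A :\ i) x w.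
Proof.
rewrite /tensor_apply; set c : F := (k.-1)`!%:R^-1.
have hadjE (t : (k.-1).-tuple W) :
    hadj F k hE (i :: t) = \sum_(A in hE | [set w in i :: t] == A) c.
  rewrite /hadj; case: ifP => [tE | tNE].
    by rewrite (big_pred1 [set w in i :: t]) // => A /=; rewrite eq_sym andb_idl // => /eqP->.
  by rewrite big_pred0 // => A; apply: contraFF tNE => /andP[AE /eqP->].
under eq_bigr do rewrite hadjE mulr_suml.
rewrite (exchange_big_dep (mem hE)) /=; last by move=> t A _ /andP[].
rewrite [RHS]big_mkcondr; apply: eq_bigr => A AE.
case: ifPn => iA; last first.
  by rewrite big_pred0 // => t; apply: contraNF iA => /andP[_ /eqP<-]; rewrite inE mem_head.
have cardA : #|A| = (k.-1).+1 by rewrite prednK // hE_unif.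
have cardAi : #|A :\ i| = k.-1 by apply/succn_inj; rewrite -cardA (cardsD1 i A) iA.
set tuples_of := fun t : (k.-1).-tuple W => all (fun w => w \in A :\ i) t && uniq t.
rewrite (eq_bigl tuples_of); last by move=> t; rewrite /= AE set_cons_tupleE.
rewrite (eq_bigr (fun _ => c * \prod_(w in A :\ i) x w)); last first.
  move=> t /andP[t_sub t_uniq]; congr (_ * _).
  have -> : A :\ i = [set w in t].
    apply/esym/eqP; rewrite eqEcard cardAi cardsE (card_uniqP t_uniq) size_tuple leqnn andbT.
    by apply/subsetP => w; rewrite inE => /(allP t_sub).
  by rewrite big_uniq //; apply: eq_bigl => w; rewrite inE.
rewrite sumr_const (@eq_card _ _ [set t | tuples_of t]); last by move=> t; rewrite inE.
rewrite card_uniq_tuples (eq_card (B := A :\ i)) // cardAi ffactnn.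
by rewrite -mulr_natl mulrA /c divff ?mul1r // pnatr_eq0 -lt0n fact_gt0.
Qed.

End UniformTensor.

Section PowerHypergraph.
Context {V : finType} {e : rel V}.
Hypothesis e_irr : irreflexive e.
Context {k : nat} {F : numFieldType}.
Hypothesis k_ge3 : (3 <= k)%N.
Local Notation W := (pvert e k).

Lemma mem_phedge_inl (u : V) (f : gedge e) : (inl u \in phedge k f) = (u \in val f).
Proof.
rewrite in_setU mem_imset; last by move=> ? ? [].
by rewrite orbC; case: imsetP => // -[].
Qed.

Lemma mem_phedge_inr (g f : gedge e) (j : 'I_(k - 2)) :
  (inr (g, j) \in phedge k f) = (g == f).
Proof.
rewrite in_setU; case: imsetP => [[? _ //] | _] /=.
by apply/imsetP/eqP => [[j' _ [-> _]] // | ->]; exists j.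
Qed.

Lemma phedge_disjoint (f : gedge e) :
  [disjoint [set inl v | v in val f] & [set inr (f, j) | j : 'I_(k - 2)] :> {set W}].
Proof. by rewrite -setI_eq0; apply/set0Pn => -[w /setIP[/imsetP[u _ ->] /imsetP[]]]. Qed.

Lemma card_phedge (f : gedge e) : #|phedge k f| = k.
Proof.
rewrite cardsU (disjoint_setI0 (phedge_disjoint f)) cards0 subn0.
rewrite !card_imset; try by move=> ? ? [].
have [a [b [_ ab ->]]] := gedge_ends e_irr f.
by rewrite cards2 ab card_ord subnKC // ltnW.
Qed.

Lemma card_phedgeD1 (f : gedge e) (i : W) : i \in phedge k f -> #|phedge k f :\ i| = k.-1.
Proof.
move=> fi; apply/succn_inj; rewrite prednK ?(leq_trans _ k_ge3) //.
by rewrite -[RHS](card_phedge f) (cardsD1 i (phedge k f)) fi.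
Qed.

Lemma phedge_inj : injective (phedge (e := e) k).
Proof. by move=> f g fg; apply: val_inj; apply/setP => u; rewrite -!mem_phedge_inl fg. Qed.

Lemma big_phedge (x : W -> F) (f : gedge e) :
  \prod_(w in phedge k f) x w =
  \prod_(u in val f) x (inl u) * \prod_(j : 'I_(k - 2)) x (inr (f, j)).
Proof.
rewrite (eq_bigl [predU [set inl v | v in val f] & [set inr (f, j) | j : 'I_(k - 2)]]);
  last by move=> w; rewrite !inE.
by rewrite bigU ?phedge_disjoint // !big_imset //= => ? ? _ _ [].
Qed.

Lemma power_tensor_applyE (x : W -> F) (i : W) :
  tensor_apply k (power_hedges e k) x i =
  \sum_(f : gedge e | i \in phedge k f) \prod_(w in phedge k f :\ i) x w.
Proof.
rewrite tensor_applyE; first last.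
- by move=> _ /imsetP[f _ ->]; exact: card_phedge.
- exact: leq_trans k_ge3.
rewrite big_mkcondr big_imset /=; last by move=> f g _ _ /phedge_inj.
by rewrite -big_mkcondr.
Qed.

Lemma power_hyper_eigenvalueP (lam : F) :
  hyper_eigenvalue k (power_hedges e k) lam <->
  exists x : W -> F, (exists w, x w != 0) /\ forall i,
    \sum_(f : gedge e | i \in phedge k f) \prod_(w in phedge k f :\ i) x w = lam * x i ^+ k.-1.
Proof.
by split=> -[x [x_neq0 hx]]; exists x; split=> // i; rewrite -hx power_tensor_applyE.
Qed.

Definition hedge_prod (x : W -> F) (f : gedge e) : F := \prod_(w in phedge k f) x w.

Lemma hedge_prodD1 (x : W -> F) (f : gedge e) (i : W) : i \in phedge k f ->
  x i * \prod_(w in phedge k f :\ i) x w = hedge_prod x f.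
Proof. by move=> fi; rewrite /hedge_prod (big_setD1 i fi). Qed.

Lemma sum_phedge_inr (H : gedge e -> F) (g : gedge e) (j : 'I_(k - 2)) :
  \sum_(f : gedge e | inr (g, j) \in phedge k f) H f = H g.
Proof. by rewrite (big_pred1 g) // => f; rewrite /= mem_phedge_inr eq_sym. Qed.

Lemma sum_phedge_inl (H : gedge e -> F) (u : V) :
  \sum_(f : gedge e | inl u \in phedge k f) H f = \sum_(f : gedge e | u \in val f) H f.
Proof. by apply: eq_bigl => f; rewrite mem_phedge_inl. Qed.

Section EigenEquations.
Context {x : W -> F} {lam : F}.
Hypothesis hx : forall i,
  \sum_(f : gedge e | i \in phedge k f) \prod_(w in phedge k f :\ i) x w = lam * x i ^+ k.-1.

Lemma hedge_prod_new (f : gedge e) (j : 'I_(k - 2)) :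
  hedge_prod x f = lam * x (inr (f, j)) ^+ k.
Proof.
rewrite -(hedge_prodD1 x f (inr (f, j))) ?mem_phedge_inr //.
have := hx (inr (f, j)); rewrite sum_phedge_inr => ->.
by rewrite mulrCA -exprS prednK // (leq_trans _ k_ge3).
Qed.

Lemma sum_hedge_prod_old (u : V) :
  \sum_(f : gedge e | u \in val f) hedge_prod x f = lam * x (inl u) ^+ k.
Proof.
have -> : x (inl u) ^+ k = x (inl u) * x (inl u) ^+ k.-1.
  by rewrite -exprS prednK // (leq_trans _ k_ge3).
rewrite mulrCA -hx mulr_sumr -sum_phedge_inl.
by apply: eq_bigr => f uf; rewrite hedge_prodD1.
Qed.

End EigenEquations.
End PowerHypergraph.

Section SignedSubgraphOfEigenvector.
Context {V : finType} {e : rel V}.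
Hypotheses (e_sym : symmetric e) (e_irr : irreflexive e).
Variable k : nat.
Context {C : numClosedFieldType}.
Hypothesis k_ge3 : (3 <= k)%N.
Local Notation W := (pvert e k).
Variables (x : W -> C) (lam : C).
Hypothesis x_neq0 : exists w, x w != 0.
Hypothesis hx : forall i,
  \sum_(f : gedge e | i \in phedge k f) \prod_(w in phedge k f :\ i) x w = lam * x i ^+ k.-1.
Hypothesis lam_neq0 : lam != 0.

Lemma hedge_prod_sqr (f : gedge e) : hedge_prod x f != 0 ->
  lam ^+ (k - 2) * hedge_prod x f ^+ 2 = (\prod_(u in val f) x (inl u)) ^+ k.
Proof.
move=> Pf; set N := \prod_(j : 'I_(k - 2)) x (inr (f, j)).
have P_pow : hedge_prod x f ^+ (k - 2) = lam ^+ (k - 2) * N ^+ k.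
  rewrite -[in LHS](card_ord (k - 2)) -prodr_const.
  rewrite (eq_bigr _ (fun j _ => hedge_prod_new k_ge3 hx f j)) big_split /=.
  by rewrite prodr_const card_ord prodrXl.
apply: (mulIf (expf_neq0 (k - 2) Pf)); rewrite [in RHS]P_pow -mulrA -exprD subnKC 1?ltnW //.
by rewrite /hedge_prod big_phedge exprMn -/N mulrCA.
Qed.

Definition eigen_mu : C := sqrtC (lam ^+ (k - 2)).
Definition old_sqrt (u : V) : C := sqrtC (x (inl u) ^+ k).

(* By [hedge_prod_sqr], [hedge_prod x f * eigen_mu] is [+/-] the product of
   [old_sqrt] over the ends of [f]; this sign labels [f]. *)
Definition hedge_sign (f : gedge e) : int :=
  if hedge_prod x f == 0 then 0
  else if hedge_prod x f * eigen_mu == \prod_(u in val f) old_sqrt u then 1 else -1.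

Definition sign_graph : V -> V -> int := pair_weight hedge_sign.
Definition old_support : {set V} := [set u | x (inl u) != 0].

Lemma hedge_signE (f : gedge e) :
  (hedge_sign f)%:~R * \prod_(u in val f) old_sqrt u = hedge_prod x f * eigen_mu.
Proof.
rewrite /hedge_sign; have [-> | Pf] := eqVneq (hedge_prod x f) 0.
  by rewrite mulr0z !mul0r.
case: eqP => [-> | PZ]; first by rewrite mulr1z mul1r.
have : (hedge_prod x f * eigen_mu) ^+ 2 = (\prod_(u in val f) old_sqrt u) ^+ 2.
  rewrite exprMn sqrtCK mulrC hedge_prod_sqr // -!prodrXl.
  by apply: eq_bigr => u _; rewrite sqrtCK.
by move/eqP; rewrite eqf_sqr => /orP[/eqP/PZ // | /eqP->]; rewrite mulrN1z mulN1r.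
Qed.

Lemma sign_graph_subgraph : signed_subgraph e old_support sign_graph.
Proof.
split=> [u v | u v | u v]; rewrite /sign_graph /pair_weight.
- by rewrite edge_ofC.
- by case: (edge_of u v) => [f|] //; rewrite /hedge_sign; repeat case: ifP.
case uv: (edge_of u v) => [f|] //; rewrite /hedge_sign.
case: ifPn => [_ | /prodf_neq0 Pf _]; first by rewrite eqxx.
have f_uv := edge_of_some uv; have [euv _] := gedge_set2 e_sym e_irr f_uv.
by split=> //; rewrite inE Pf // mem_phedge_inl f_uv !inE eqxx ?orbT.
Qed.

(* For [k = 3] a hyperedge has a single new vertex, whose eigen-equation reads
   [x u * x v = lam * x_new ^+ 2]. *)
Lemma sign_graph_induced : k = 3 ->
  forall u v, u \in old_support -> v \in old_support -> e u v -> sign_graph u v != 0.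
Proof.
move=> k3 u v uS vS euv; have [f uv f_uv] := edge_ofP euv.
have k2 : (k - 2 = 1)%N by rewrite k3.
have j0_lt : (0 < k - 2)%N by rewrite k2.
set j0 : 'I_(k - 2) := Ordinal j0_lt.
have j0_uniq (j : 'I_(k - 2)) : j = j0.
  by apply: ord_inj; have := ltn_ord j; rewrite [X in (_ < X)%N]k2 ltnS leqn0 => /eqP.
have rest_neq0 : \prod_(w in phedge k f :\ inr (f, j0)) x w != 0.
  apply/prodf_neq0 => -[a | [g j]]; rewrite in_setD1.
    by rewrite mem_phedge_inl f_uv !inE => /orP[]/eqP->; [move: uS | move: vS]; rewrite inE.
  by rewrite mem_phedge_inr (j0_uniq j) => /andP[+ /eqP gf]; rewrite gf eqxx.
have new_neq0 : x (inr (f, j0)) != 0.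
  apply: contraNneq rest_neq0 => x0; have := hx (inr (f, j0)).
  have km1 : (k.-1 == 0)%N = false by rewrite k3.
  by rewrite sum_phedge_inr x0 expr0n km1 mulr0 => ->.
rewrite /sign_graph /pair_weight uv /hedge_sign (hedge_prod_new k_ge3 hx f j0).
by rewrite mulf_eq0 expf_eq0 (negbTE lam_neq0) (negbTE new_neq0) andbF; case: ifP.
Qed.

Lemma sign_graph_eigen (u : V) : u \in old_support ->
  \sum_w (sign_graph u w)%:~R * old_sqrt w = lam * eigen_mu * old_sqrt u.
Proof.
rewrite inE => xu_neq0.
have zu_neq0 : old_sqrt u != 0 by rewrite sqrtC_eq0 expf_neq0.
apply: (mulfI zu_neq0); rewrite mulr_sumr.
transitivity (eigen_mu * \sum_(f : gedge e | u \in val f) hedge_prod x f).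
  rewrite (big_gedge_incident e_irr) mulr_sumr; apply: eq_bigr => w _.
  rewrite /sign_graph /pair_weight; case uw: (edge_of u w) => [f|]; last first.
    by rewrite mulr0z !mul0r !mulr0.
  have f_uw := edge_of_some uw; have [_ u_neq_w] := gedge_set2 e_sym e_irr f_uw.
  by rewrite [RHS]mulrC -hedge_signE f_uw big_setU1 ?big_set1 ?inE // mulrCA.
by rewrite (sum_hedge_prod_old k_ge3 hx) -(sqrtCK (x (inl u) ^+ k)) -/(old_sqrt u); ring.
Qed.

Lemma old_sqrt_neq0 : exists u, old_sqrt u != 0.
Proof.
have old_neq0 u : x (inl u) != 0 -> old_sqrt u != 0 by move=> xu; rewrite sqrtC_eq0 expf_neq0.
case: x_neq0 => -[u xu | [f j] xfj]; first by exists u; apply: old_neq0.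
have /prodf_neq0 Pf : hedge_prod x f != 0.
  by rewrite (hedge_prod_new k_ge3 hx f j) mulf_neq0 // expf_neq0.
have [a [b [_ _ f_ab]]] := gedge_ends e_irr f.
by exists a; apply/old_neq0/Pf; rewrite mem_phedge_inl f_ab !inE eqxx.
Qed.

Lemma sign_graph_eigenvalue :
  eigenvalue (signed_adj C old_support sign_graph) (lam * eigen_mu).
Proof.
have [s_sym _ _] := sign_graph_subgraph.
apply/(signed_adj_eigenvalueP s_sym).
exists old_sqrt; split; [|exact: old_sqrt_neq0 | exact: sign_graph_eigen].
move=> u; rewrite inE negbK => /eqP x0.
by rewrite /old_sqrt x0 expr0n (gtn_eqF (leq_trans _ k_ge3)) // sqrtC0.
Qed.

Lemma eigen_mu_sqr : (lam * eigen_mu) ^+ 2 = lam ^+ k.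
Proof. by rewrite exprMn sqrtCK -exprD subnKC // ltnW. Qed.

End SignedSubgraphOfEigenvector.

Section EigenvectorOfSignedSubgraph.
Context {V : finType} {e : rel V}.
Hypotheses (e_sym : symmetric e) (e_irr : irreflexive e).
Variable k : nat.
Context {C : numClosedFieldType}.
Hypothesis k_ge3 : (3 <= k)%N.
Local Notation W := (pvert e k).
Variables (S : {set V}) (s : V -> V -> int) (beta lam : C) (y : V -> C).
Hypothesis s_sub : signed_subgraph e S s.
Hypothesis y_supp : forall u, u \notin S -> y u = 0.
Hypothesis hy : forall u, u \in S -> \sum_w (s u w)%:~R * y w = beta * y u.
Hypothesis beta_lam : beta ^+ 2 = lam ^+ k.
Hypothesis lam_neq0 : lam != 0.

Let k_gt0 : (0 < k)%N. Proof. exact: leq_trans k_ge3. Qed.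

Lemma beta_neq0 : beta != 0.
Proof. by apply: contraNneq (expf_neq0 k lam_neq0) => b0; rewrite -beta_lam b0 expr0n. Qed.

Definition old_root (u : V) : C := k.-root (y u ^+ 2).

Definition hedge_target (f : gedge e) : C :=
  lam / beta * (edge_weight s f)%:~R * \prod_(u in val f) y u.

Definition new_root (f : gedge e) : C := k.-root (hedge_target f / lam).

Definition twist (f : gedge e) : C :=
  hedge_target f / \prod_(u in val f) old_root u / new_root f ^+ (k - 2).

(* The old vertices carry [k]-th roots of [y ^+ 2]; the new vertices of [f]
   carry [k]-th roots of [hedge_target f / lam], one of them multiplied by the
   root of unity [twist f] so that the whole hyperedge multiplies to
   [hedge_target f]. *)
Definition lift (w : W) : C :=
  match w with
  | inl u => old_root u
  | inr (f, j) => if hedge_target f == 0 then 0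
                  else (if val j == 0%N then twist f else 1) * new_root f
  end.

Lemma prod_old_root_exp (f : gedge e) :
  (\prod_(u in val f) old_root u) ^+ k = (\prod_(u in val f) y u) ^+ 2.
Proof. by rewrite -!prodrXl; apply: eq_bigr => u _; rewrite rootCK. Qed.

Lemma hedge_target_neq0 {f : gedge e} : hedge_target f != 0 ->
  [/\ edge_weight s f != 0, \prod_(u in val f) y u != 0
    & \prod_(u in val f) old_root u != 0].
Proof.
rewrite !mulf_eq0 intr_eq0 negb_or => /andP[/norP[_ ew_neq0] Y_neq0].
split=> //; have := congr1 (fun a => a == 0) (prod_old_root_exp f).
by rewrite !expf_eq0 k_gt0 /= => ->.
Qed.

Lemma edge_weight_sqr (f : gedge e) : edge_weight s f != 0 ->
  (edge_weight s f)%:~R ^+ 2 = 1 :> C.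
Proof.
have [s_sym s_val _] := s_sub; have [a [b [_ _ f_ab]]] := gedge_ends e_irr f.
rewrite (edge_weightE e_sym e_irr s_sym f_ab).
by move: (s_val a b); rewrite !inE => /or3P[]/eqP->; rewrite ?eqxx // ?sqrrN expr1n.
Qed.

(* [twist f ^+ k = 1] reduces to [(P / X) ^+ 2 = (X / lam) ^+ (k - 2)], where
   [P = hedge_target f] and [X] is the product of the old roots, which holds
   because [beta ^+ 2 = lam ^+ k] and [X ^+ k = Y ^+ 2]. *)
Lemma twist_unity (f : gedge e) : hedge_target f != 0 -> twist f ^+ k = 1.
Proof.
move=> Pf; have [ew_neq0 _ X_neq0] := hedge_target_neq0 Pf.
set P := hedge_target f in Pf *; set X := \prod_(u in val f) old_root u in X_neq0 *.
have exp_k (a : C) : a ^+ k = a ^+ (k - 2) * a ^+ 2 by rewrite -exprD subnK // ltnW.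
have P_sqr : P ^+ 2 = lam ^+ 2 / lam ^+ k * X ^+ k.
  rewrite /P /hedge_target !exprMn edge_weight_sqr // prod_old_root_exp.
  by rewrite -beta_lam exprVn mulr1.
have Q_sqr : (P / X) ^+ 2 = (X / lam) ^+ (k - 2).
  rewrite expr_div_n P_sqr expr_div_n !exp_k.
  by field; rewrite expf_neq0 ?X_neq0.
have Q_exp : (P / X) ^+ k = (P / lam) ^+ (k - 2).
  by rewrite exp_k Q_sqr -exprMn mulrA divfK.
rewrite /twist -/P -/X expr_div_n Q_exp -exprM mulnC exprM rootCK // divff //.
by rewrite expf_neq0 // mulf_neq0 // invr_eq0.
Qed.

Lemma lift_new_exp (f : gedge e) (j : 'I_(k - 2)) : hedge_target f != 0 ->
  lift (inr (f, j)) ^+ k = hedge_target f / lam.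
Proof.
move=> Pf; rewrite /= (negbTE Pf) exprMn rootCK //.
by case: ifP => _; rewrite ?twist_unity ?expr1n ?mul1r.
Qed.

Lemma hedge_prod_lift (f : gedge e) : hedge_prod lift f = hedge_target f.
Proof.
have j0_lt : (0 < k - 2)%N by rewrite subn_gt0.
set j0 : 'I_(k - 2) := Ordinal j0_lt.
have [P0 | Pf] := eqVneq (hedge_target f) 0.
  rewrite P0 /hedge_prod; apply/eqP/prodf_eq0; exists (inr (f, j0)).
    by rewrite mem_phedge_inr.
  by rewrite /= P0 eqxx.
have [_ _ X_neq0] := hedge_target_neq0 Pf.
have t_neq0 : new_root f != 0 by rewrite rootC_eq0 // mulf_neq0 ?invr_eq0.
have new_prod : \prod_(j : 'I_(k - 2)) lift (inr (f, j)) = twist f * new_root f ^+ (k - 2).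
  rewrite /= (negbTE Pf) big_split /= prodr_const card_ord (bigD1 j0) //=.
  rewrite big1 ?mulr1 // => j j_neq0.
  by rewrite ifF //; apply: contraNF j_neq0 => /eqP j0'; apply/eqP/ord_inj.
by rewrite /hedge_prod big_phedge new_prod /twist divfK ?expf_neq0 // mulrC divfK.
Qed.

Lemma sum_hedge_target (u : V) : u \in S ->
  \sum_(f : gedge e | u \in val f) hedge_target f = lam * y u ^+ 2.
Proof.
have [s_sym _ s_supp] := s_sub.
move=> uS; rewrite (big_gedge_incident e_irr).
transitivity (lam / beta * y u * \sum_w (s u w)%:~R * y w); last first.
  by rewrite hy //; field; exact: beta_neq0.
rewrite mulr_sumr; apply: eq_bigr => w _; case uw: (edge_of u w) => [f|].
  have f_uw := edge_of_some uw; have [_ u_neq_w] := gedge_set2 e_sym e_irr f_uw.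
  rewrite /hedge_target (edge_weightE e_sym e_irr s_sym f_uw) f_uw.
  by rewrite big_setU1 ?big_set1 ?inE //=; ring.
have [-> | /s_supp[euw _ _]] := eqVneq (s u w) 0; first by rewrite mulr0z mul0r mulr0.
by have [f] := edge_ofP euw; rewrite uw.
Qed.

Lemma lift_eigen_old (u : V) :
  \sum_(f : gedge e | inl u \in phedge k f) \prod_(w in phedge k f :\ inl u) lift w =
  lam * lift (inl u) ^+ k.-1.
Proof.
have km1_gt0 : (0 < k.-1)%N by rewrite -ltnS prednK // ltnW.
rewrite sum_phedge_inl /=.
have [yu0 | yu_neq0] := eqVneq (y u) 0.
  rewrite /old_root yu0 expr0n /= rootC0 expr0n (gtn_eqF km1_gt0) mulr0.
  apply: big1 => f uf; have j0_lt : (0 < k - 2)%N by rewrite subn_gt0.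
  apply/eqP/prodf_eq0; exists (inr (f, Ordinal j0_lt)).
    by rewrite in_setD1 mem_phedge_inr eqxx.
  by rewrite /= ifT // /hedge_target (big_setD1 u uf) /= yu0 mul0r mulr0.
have root_neq0 : old_root u != 0 by rewrite rootC_eq0 // expf_neq0.
apply: (mulfI root_neq0); rewrite mulr_sumr mulrCA -exprS prednK // /old_root rootCK //.
rewrite -sum_hedge_target; last by apply: contraR yu_neq0 => /y_supp ->.
by apply: eq_bigr => f uf; rewrite hedge_prodD1 ?mem_phedge_inl // hedge_prod_lift.
Qed.

Hypothesis s_induced : k = 3 -> forall u v, u \in S -> v \in S -> e u v -> s u v != 0.

(* With both ends of [f] in the support, the vanishing factor must be a second
   new vertex, which exists only for [k >= 4]; for [k = 3] inducedness makes
   this case impossible. *)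
Lemma prod_lift_new_eq0 (f : gedge e) (j : 'I_(k - 2)) : hedge_target f = 0 ->
  \prod_(w in phedge k f :\ inr (f, j)) lift w = 0.
Proof.
move=> P0; apply/eqP/prodf_eq0; have [a [b [eab ab f_ab]]] := gedge_ends e_irr f.
have old_mem c : c \in val f -> inl c \in phedge k f :\ inr (f, j).
  by move=> cf; rewrite in_setD1 mem_phedge_inl cf.
have old_eq0 c : y c = 0 -> lift (inl c) == 0.
  by move=> yc0; rewrite /= rootC_eq0 // yc0 expr0n.
have [ya0 | ya] := eqVneq (y a) 0.
  by exists (inl a); [apply: old_mem; rewrite f_ab !inE eqxx | exact: old_eq0].
have [yb0 | yb] := eqVneq (y b) 0.
  by exists (inl b); [apply: old_mem; rewrite f_ab !inE eqxx orbT | exact: old_eq0].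
have [s_sym _ _] := s_sub; have inS c : y c != 0 -> c \in S by apply: contraR => /y_supp ->.
have sab0 : s a b = 0.
  move/eqP: P0; rewrite /hedge_target (edge_weightE e_sym e_irr s_sym f_ab) f_ab.
  rewrite big_setU1 ?big_set1 ?inE //= !mulf_eq0 invr_eq0 intr_eq0.
  by rewrite (negbTE lam_neq0) (negbTE beta_neq0) (negbTE ya) (negbTE yb) !orbF => /eqP.
have k_neq3 : k != 3.
  by apply/eqP => /s_induced/(_ a b (inS a ya) (inS b yb) eab); rewrite sab0.
have j'_lt : ((val j == 0%N) < k - 2)%N.
  by case: (val j == 0%N); rewrite ?subn_gt0 // ltn_subRL addn1 ltn_neqAle eq_sym k_neq3.
exists (inr (f, Ordinal j'_lt)); last by rewrite /= P0 eqxx.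
rewrite in_setD1 mem_phedge_inr eqxx andbT; apply: contraTneq isT => -[/(congr1 val) /=].
by case: eqP => [-> // | j_neq0 /esym].
Qed.

Lemma lift_eigen_new (f : gedge e) (j : 'I_(k - 2)) :
  \sum_(g : gedge e | inr (f, j) \in phedge k g) \prod_(w in phedge k g :\ inr (f, j)) lift w =
  lam * lift (inr (f, j)) ^+ k.-1.
Proof.
have km1_gt0 : (0 < k.-1)%N by rewrite -ltnS prednK // ltnW.
rewrite sum_phedge_inr; have [P0 | Pf] := eqVneq (hedge_target f) 0.
  by rewrite prod_lift_new_eq0 //= P0 eqxx expr0n (gtn_eqF km1_gt0) mulr0.
have x_neq0 : lift (inr (f, j)) != 0.
  apply: contraNneq (mulf_neq0 Pf (invr_neq0 lam_neq0)) => x0.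
  by rewrite -(lift_new_exp f j Pf) x0 expr0n (gtn_eqF k_gt0).
apply: (mulfI x_neq0); rewrite hedge_prodD1 ?mem_phedge_inr // hedge_prod_lift.
by rewrite mulrCA -exprS prednK // lift_new_exp //; field.
Qed.

Lemma lift_neq0 : (exists u, y u != 0) -> exists w, lift w != 0.
Proof. by case=> u yu; exists (inl u); rewrite /= rootC_eq0 // expf_neq0. Qed.

End EigenvectorOfSignedSubgraph.

Section PowerHypergraphSpectrum.
Context {V : finType} {e : rel V}.
Hypotheses (e_sym : symmetric e) (e_irr : irreflexive e).
Variable k : nat.
Context {C : numClosedFieldType}.
Hypothesis k_ge3 : (3 <= k)%N.

Lemma power_hyper_eigenvalue0 (u0 : V) : hyper_eigenvalue k (power_hedges e k) (0 : C).
Proof.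
apply/(power_hyper_eigenvalueP e_irr k_ge3); exists (fun w => (w == inl u0)%:R); split.
  by exists (inl u0); rewrite eqxx oner_eq0.
move=> i; rewrite mul0r; apply: big1 => f fi.
have /subsetPn[w wf w_neq] : ~~ (phedge k f :\ i \subset [set inl u0]).
  have card_gt1 : (1 < #|phedge k f :\ i|)%N.
    by rewrite (card_phedgeD1 e_irr k_ge3) // -subn1 ltn_subRL.
  by apply: contraTN card_gt1 => /subset_leq_card; rewrite cards1 leqNgt.
by apply/eqP/prodf_eq0; exists w => //; rewrite inE in w_neq; rewrite (negbTE w_neq).
Qed.

Lemma signed_adj_eigenvalue0 (u0 : V) :
  eigenvalue (signed_adj C [set u0] (fun _ _ => 0%Z)) 0.
Proof.
apply/(@signed_adj_eigenvalueP _ _ _ (fun _ _ => 0%Z) (fun _ _ => erefl)).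
exists (fun u => (u == u0)%:R); split.
- by move=> u; rewrite inE => /negbTE->.
- by exists u0; rewrite eqxx oner_eq0.
- by move=> u _; rewrite mul0r big1 // => w _; rewrite mul0r.
Qed.

Lemma signed_subgraph_of_power_eigenvalue (lam : C) :
  hyper_eigenvalue k (power_hedges e k) lam ->
  exists (S : {set V}) (s : V -> V -> int) (beta : C),
    [/\ signed_subgraph e S s,
        k = 3 -> forall u v, u \in S -> v \in S -> e u v -> s u v != 0,
        eigenvalue (signed_adj C S s) beta & beta ^+ 2 = lam ^+ k].
Proof.
case/(power_hyper_eigenvalueP e_irr k_ge3) => x [x_neq0 hx].
have [lam0 | lam_neq0] := eqVneq lam 0; last first.
  exists (old_support k x), (sign_graph k x lam), (lam * eigen_mu k lam); split.
  - exact: sign_graph_subgraph.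
  - exact: sign_graph_induced.
  - exact: sign_graph_eigenvalue.
  - exact: eigen_mu_sqr.
have [u0 _] : exists u0 : V, true.
  case: x_neq0 => -[u _ | [f _] _]; first by exists u.
  by have [a _] := gedge_ends e_irr f; exists a.
exists [set u0], (fun _ _ => 0%Z), 0; split; last 1 first.
- by rewrite lam0 !expr0n (gtn_eqF (leq_trans _ k_ge3)).
- by split=> // u v; rewrite eqxx.
- by move=> _ u v; rewrite !inE => /eqP-> /eqP->; rewrite e_irr.
- exact: signed_adj_eigenvalue0.
Qed.

Lemma power_eigenvalue_of_signed_subgraph (S : {set V}) (s : V -> V -> int) (beta lam : C) :
  signed_subgraph e S s ->
  (k = 3 -> forall u v, u \in S -> v \in S -> e u v -> s u v != 0) ->
  eigenvalue (signed_adj C S s) beta -> beta ^+ 2 = lam ^+ k ->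
  hyper_eigenvalue k (power_hedges e k) lam.
Proof.
move=> s_sub s_induced; have [s_sym _ _] := s_sub.
move/(signed_adj_eigenvalueP s_sym) => [y [y_supp y_neq0 hy]] beta_lam.
have [lam0 | lam_neq0] := eqVneq lam 0.
  by have [u0 _] := y_neq0; rewrite lam0; exact: power_hyper_eigenvalue0.
apply/(power_hyper_eigenvalueP e_irr k_ge3).
exists (lift k s beta lam y); split; first exact: lift_neq0.
case=> [u | [f j]].
  exact: (lift_eigen_old e_sym e_irr _ k_ge3 _ _ _ _ _ s_sub y_supp hy beta_lam
                         lam_neq0).
exact: (lift_eigen_new e_sym e_irr _ k_ge3 _ _ _ _ _ s_sub y_supp beta_lam lam_neq0
                       s_induced).
Qed.

End PowerHypergraphSpectrum.

Theorem theorem1 (R : realType) (V : finType) (e : rel V)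
    (e_sym : symmetric e) (e_irr : irreflexive e)
    (k : nat) (hk : (3 <= k)%N) (lambda : R[i]) :
  hyper_eigenvalue k (power_hedges e k) lambda <->
  if k == 3%N then
    exists (S : {set V}) (s : V -> V -> int) (beta : R[i]),
      [/\ signed_induced_subgraph e S s,
          eigenvalue (signed_adj R[i] S s) beta &
          beta ^+ 2 = lambda ^+ k]
  else
    exists (S : {set V}) (s : V -> V -> int) (beta : R[i]),
      [/\ signed_subgraph e S s,
          eigenvalue (signed_adj R[i] S s) beta &
          beta ^+ 2 = lambda ^+ k].
Proof.
have forward := signed_subgraph_of_power_eigenvalue (C := R[i]) e_sym e_irr _ hk.
have backward := power_eigenvalue_of_signed_subgraph (C := R[i]) e_sym e_irr _ hk.
split=> [/forward[S [s [beta [s_sub s_ind eig b2]]]] |].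
  by case: eqP => [k3 | _]; exists S, s, beta; split=> //; split=> //; apply: s_ind.
case: eqP => [k3 | k_neq3] [S [s [beta [s_sub eig b2]]]].
  by case: s_sub => s_sub s_ind; apply: (backward _ _ _ _ s_sub _ eig b2) => _.
by apply: (backward _ _ _ _ s_sub _ eig b2) => /k_neq3.
Qed.
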